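(* Let $m,k\in\mathbb{N}$ with $m\leq 2^k$. Then the matrix ring $\mathbb{M}_m(\mathbb{F}_2)$ is $n$-torsion clean for some natural number $n\leq 2^k$.
   Context: $\mathbb{F}_2$ is the field with two elements and $\mathbb{M}_m(\mathbb{F}_2)$ the ring of $m\times m$ matrices over it. A ring $R$ is $n$-torsion clean if every $r\in R$ can be written $r=e+u$ with $e^2=e$, $u$ a unit, $u^n=1$, and $n$ is the smallest natural number with this property. *)

From HB Require Import structures.
From mathcomp Require Import all_boot all_order all_algebra.
Set Implicit Arguments. Unset Strict Implicit. Unset Printing Implicit Defensive.
Import GRing.Theory.
Local Open Scope ring_scope.

Definition mx_torsion_clean_with (m n : nat) : Prop :=
  forall A : 'M['F_2]_m,
    exists E U : 'M['F_2]_m,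
      [/\ E *m E = E, U \in unitmx, U ^+ n = 1 & A = E + U].

(* M_m(F_2) is n-torsion clean: n is the least natural number >= 1 with the
   property above (n = 0 is excluded since u^0 = 1 is vacuous). *)
Definition mx_n_torsion_clean (m n : nat) : Prop :=
  [/\ (0 < n)%N, mx_torsion_clean_with m n &
      forall k : nat, (0 < k)%N -> (k < n)%N -> ~ mx_torsion_clean_with m k].

From mathcomp Require Import all_boot all_order all_algebra.
Set Implicit Arguments. Unset Strict Implicit. Unset Printing Implicit Defensive.
Import GRing.Theory.
Local Open Scope ring_scope.

(* Every A in M_m(F_2) is nil-clean with index at most m: A = E + N with
   E^2 = E and N^m = 0.  Applied to A + 1 this gives A = E + (N + 1), and in
   characteristic 2, (N + 1)^(2^k) = N^(2^k) + 1 = 1 as soon as m <= 2^k; the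
   least working exponent exists because the property is decidable.
   Nil-cleanness is proved by strong induction on m, using the Krylov matrix K
   of e_0.  If K is singular, its row space is a proper nonzero invariant
   subspace and A is similar to a block triangular matrix with smaller
   diagonal blocks.  Otherwise A is similar to a companion matrix C with first
   row c.  If c_0 = 1, C is the nilpotent shift plus the idempotent e_0^T c.
   If c_0 = 0, the idempotent must have trace 0, hence rank 2; it is built on
   the first three coordinates, with respect to which C is block triangular
   with the shift as lower diagonal block. *)

Section NilClean.
Variable R : pzRingType.

Definition nil_clean_mx n (A : 'M[R]_n) :=
  exists2 E : 'M_n, E *m E = E & (A - E) ^+ n = 0.

Lemma expr_block_mx_lower r s (X : 'M[R]_r) (Y : 'M_(s, r)) (Z : 'M_s) k :
  exists W, block_mx X 0 Y Z ^+ k = block_mx (X ^+ k) 0 W (Z ^+ k).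
Proof.
elim: k => [|k [W IH]]; first by exists 0; rewrite !expr0 -scalar_mx_block.
exists (Y *m X ^+ k + Z *m W).
by rewrite !exprS IH -!mulmxE mulmx_block !mul0mx !mulmx0 !addr0 add0r.
Qed.

Lemma block_mx_lower_nilpotent r s (X : 'M[R]_r) (Y : 'M_(s, r)) (Z : 'M_s) :
  X ^+ r = 0 -> Z ^+ s = 0 -> block_mx X 0 Y Z ^+ (r + s) = 0.
Proof.
move=> Xr0 Zs0; rewrite [X in _ ^+ X]addnC exprD.
have [? ->] := expr_block_mx_lower X Y Z s.
have [? ->] := expr_block_mx_lower X Y Z r.
by rewrite Xr0 Zs0 -mulmxE mulmx_block !mul0mx !mulmx0 !addr0 block_mx0.
Qed.

Lemma nil_clean_mx_block r s (A1 : 'M[R]_r) (A21 : 'M_(s, r)) (A2 : 'M_s) :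
  nil_clean_mx A1 -> nil_clean_mx A2 -> nil_clean_mx (block_mx A1 0 A21 A2).
Proof.
move=> [E1 E1E nilA1] [E2 E2E nilA2]; exists (block_mx E1 0 0 E2).
  by rewrite mulmx_block !mul0mx !mulmx0 !addr0 add0r E1E E2E.
rewrite opp_block_mx add_block_mx !oppr0 !addr0.
exact: block_mx_lower_nilpotent.
Qed.

End NilClean.

Section Companion.
Variable R : pzRingType.

Definition shift_mx n : 'M[R]_n := \matrix_(i, j) (i == j.+1 :> nat)%:R.

Definition companion_mx n (c : 'rV[R]_n) : 'M_n :=
  \matrix_(i, j) if i == 0 :> nat then c 0 j else (i == j.+1 :> nat)%:R.

Lemma companion_mx0 n : companion_mx 0 = shift_mx n.
Proof. by apply/matrixP => i j; rewrite !mxE; case: eqP => // ->. Qed.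

Lemma row0_companion_mx n (c : 'rV[R]_n.+1) : row ord0 (companion_mx c) = c.
Proof. by apply/rowP => j; rewrite !mxE. Qed.

Lemma row_lift_companion_mx n (c : 'rV[R]_n.+1) (i : 'I_n) :
  row (lift ord0 i) (companion_mx c) = delta_mx 0 (widen_ord (leqnSn n) i).
Proof.
apply/rowP => j; rewrite !mxE /= /bump add1n eqSS eq_sym.
by rewrite -[(j == _)]val_eqE.
Qed.

Lemma companion_mx_block r s (c1 : 'rV[R]_r.+1) (c2 : 'rV_s) :
  exists Y, companion_mx (row_mx c1 c2) =
            block_mx (companion_mx c1) (delta_mx 0 0 *m c2) Y (shift_mx s).
Proof.
exists (dlsubmx (companion_mx (row_mx c1 c2))).
rewrite -[LHS]submxK; congr block_mx; apply/matrixP => i j.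
all: rewrite !(row_mxEl, row_mxEr, mxE) //=.
- rewrite big_ord1 !mxE eqxx andbT -val_eqE /=.
  case: eqP => _; rewrite ?mul1r ?mul0r //.
  by rewrite ltn_eqF // (leq_trans (ltn_ord i)) // leqW // leq_addr.
- by rewrite -addnS eqn_add2l.
Qed.

Lemma shift_mx_nilpotent n : shift_mx n ^+ n = 0.
Proof.
elim: n => [|n IH]; first exact: thinmx0.
have [Y] := companion_mx_block (0 : 'rV_1) (0 : 'rV_n).
rewrite row_mx0 mulmx0 !companion_mx0 => ->.
apply: (@block_mx_lower_nilpotent _ 1 n _ Y _ _ IH).
by apply/matrixP => i j; rewrite !ord1 !mxE.
Qed.

Lemma nil_clean_companion_row_mx r s (c1 : 'rV[R]_r.+1) (c2 : 'rV_s)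
    (E1 : 'M_r.+1) :
  E1 *m E1 = E1 -> E1 *m delta_mx 0 0 = delta_mx 0 0 :> 'cV_r.+1 ->
  (companion_mx c1 - E1) ^+ r.+1 = 0 ->
  nil_clean_mx (companion_mx (row_mx c1 c2)).
Proof.
move=> E1E E1e0 nilC1; have [Y ->] := companion_mx_block c1 c2.
exists (block_mx E1 (delta_mx 0 0 *m c2) 0 0 : 'M_(r.+1 + s)).
  by rewrite mulmx_block !mul0mx !mulmx0 !addr0 mulmxA E1e0 E1E.
rewrite opp_block_mx add_block_mx subrr !oppr0 !addr0.
exact: block_mx_lower_nilpotent nilC1 (shift_mx_nilpotent s).
Qed.

Lemma nil_clean_companion_trace1 n (c : 'rV[R]_n.+1) :
  c 0 0 = 1 -> nil_clean_mx (companion_mx c).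
Proof.
move=> c00; rewrite -[c](hsubmxK (c : 'rV_(1 + n))).
apply: (@nil_clean_companion_row_mx 0 _ _ _ 1); rewrite ?mulmx1 ?mul1mx //.
apply/matrixP => i j; rewrite !ord1 !mxE /=.
by rewrite (_ : lshift n 0 = 0) ?c00 ?subrr //; apply: val_inj.
Qed.

End Companion.

Section Similarity.
Variable R : comUnitRingType.

Lemma expr_mulmx_conj n (P X : 'M[R]_n) k : P \in unitmx ->
  (invmx P *m X *m P) ^+ k = invmx P *m X ^+ k *m P.
Proof.
move=> Pu; elim: k => [|k IH]; first by rewrite !expr0 mulmx1 mulVmx.
by rewrite !exprS IH -!mulmxE !mulmxA mulmxK.
Qed.

Lemma nil_clean_mx_similar n (P A B : 'M[R]_n) : P \in unitmx ->
  P *m A = B *m P -> nil_clean_mx B -> nil_clean_mx A.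
Proof.
move=> Pu PA_BP [E EE nilBE]; exists (invmx P *m E *m P).
  by rewrite !mulmxA mulmxK // -(mulmxA _ E E) EE.
have -> : A = invmx P *m B *m P by rewrite -mulmxA -PA_BP mulKmx.
by rewrite -mulmxBl -mulmxBr expr_mulmx_conj // nilBE mulmx0 mul0mx.
Qed.

End Similarity.

Section StableSubspace.
Variable F : fieldType.

Lemma ursubmx_conj_stable r s (A Q : 'M[F]_(r + s)) : Q \in unitmx ->
  stablemx (usubmx Q) A -> ursubmx (Q *m A *m invmx Q) = 0.
Proof.
move=> Qu /submxP[D QA_D].
rewrite /ursubmx -!mul_usub_mx QA_D -mulmxA mul_usub_mx mulmxV //.
by rewrite scalar_mx_block /block_mx col_mxKu mul_mx_row row_mxKr mulmx0.
Qed.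

Lemma nil_clean_mx_stable n (A U : 'M[F]_n) : stablemx U A ->
  (forall B : 'M[F]_(\rank U), nil_clean_mx B) ->
  (forall B : 'M[F]_(n - \rank U), nil_clean_mx B) -> nil_clean_mx A.
Proof.
rewrite -stablemx_row_base /row_base.
move: (row_ebase U) (row_ebase_unit U) (\rank U) (rank_leq_row U).
move=> Q Qu r le_rn; move: (n - r)%N (subnKC le_rn) => s def_n; subst n.
move=> stQA nilR nilS.
apply: (nil_clean_mx_similar Qu (B := Q *m A *m invmx Q)).
  by rewrite mulmxKV.
rewrite -[Q *m A *m _]submxK ursubmx_conj_stable //; last first.
  by rewrite pid_mx_row -[Q]vsubmxK mul_row_col mul1mx mul0mx addr0 in stQA.
exact: nil_clean_mx_block.
Qed.

End StableSubspace.

Section Krylov.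
Variable R : comNzRingType.

(* The rows are v A^(n-1), ..., v A, v: in this order A acts on them as a
   companion matrix whose first row holds the coefficients. *)
Definition krylov_mx n (v : 'rV[R]_n) (A : 'M_n) : 'M_n :=
  \matrix_(i < n) (v *m A ^+ rev_ord i).

Lemma Cayley_Hamilton_expr n (A : 'M[R]_n.+1) :
  A ^+ n.+1 = \sum_(i < n.+1) - (char_poly A)`_i *: A ^+ i.
Proof.
have lead1 : (char_poly A)`_n.+1 = 1.
  by have := monicP (char_poly_monic A); rewrite lead_coefE size_char_poly.
have CH := Cayley_Hamilton A.
rewrite -[char_poly A]coefK size_char_poly poly_def big_ord_recr /= lead1 in CH.
move/eqP: CH; rewrite scale1r rmorphD rmorph_sum /= rmorphXn /= horner_mx_X.
rewrite addrC addr_eq0 => /eqP ->; rewrite -sumrN; apply: eq_bigr => i _.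
by rewrite linearZ /= rmorphXn /= horner_mx_X scaleNr.
Qed.

Lemma krylov_mx_companion n (v : 'rV[R]_n.+1) (A : 'M_n.+1) :
  krylov_mx v A *m A =
  companion_mx (\row_j - (char_poly A)`_(rev_ord j)) *m krylov_mx v A.
Proof.
apply/row_matrixP => i; rewrite !row_mul rowK -mulmxA mulmxE -exprSr.
case: (unliftP ord0 i) => [i'|] ->.
  rewrite row_lift_companion_mx -rowE rowK; congr (v *m A ^+ _).
  by rewrite /= /bump add1n subSS subnSK.
rewrite (_ : (rev_ord ord0).+1 = n.+1); last by rewrite /= subSS subn0.
rewrite row0_companion_mx Cayley_Hamilton_expr mulmx_sumr mulmx_sum_row.
rewrite (reindex_inj rev_ord_inj); apply: eq_bigr => j _.
by rewrite !mxE rowK scalemxAr.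
Qed.

End Krylov.

Section Char2.
Variable R : pzRingType.
Hypothesis two0 : 2%:R = 0 :> R.

Lemma expr2n_addr1 (x : R) k : (x + 1) ^+ (2 ^ k) = x ^+ (2 ^ k) + 1.
Proof.
elim: k => [|k IH]; first by rewrite !expr1.
by rewrite expnSr !exprM IH sqrrD1 -mulr_natr two0 mulr0 addr0.
Qed.

Lemma unipotent_expr2n (x : R) m k :
  x ^+ m = 0 -> (m <= 2 ^ k)%N -> (x + 1) ^+ (2 ^ k) = 1.
Proof.
move=> xm0 le_m2k.
by rewrite expr2n_addr1 -(subnKC le_m2k) exprD xm0 mul0r add0r.
Qed.

End Char2.

Lemma F2_cases (x : 'F_2) : x = 0 \/ x = 1.
Proof. by case: x => [[|[|//]] ?]; [left | right]; apply: val_inj. Qed.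

Lemma nil_clean_companion2 (c : 'rV['F_2]_2) :
  c 0 0 = 0 -> nil_clean_mx (companion_mx c).
Proof.
move=> c00; have -> : c = \row_j [:: 0; c 0 1]`_j.
  apply/rowP => -[[|[|//]] ?]; rewrite !mxE /=; [rewrite -c00 |];
  by congr (c 0 _); apply: val_inj.
move: (c 0 1) => x; exists x%:M.
  by rewrite -scalar_mxM; case: (F2_cases x) => ->; rewrite ?mulr0 ?mulr1.
rewrite expr2 -mulmxE; apply/matrixP => i j.
rewrite !(big_ord_recl, big_ord0, mxE).
case: i => [[|[|//]] ?]; case: j => [[|[|//]] ?]; case: (F2_cases x) => -> /=;
  by apply/eqP.
Qed.

Lemma companion3_nil_clean_witness (c : 'rV['F_2]_3) : c 0 0 = 0 ->
  exists E : 'M_3, [/\ E *m E = E, E *m delta_mx 0 0 = delta_mx 0 0 :> 'cV_3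
                     & (companion_mx c - E) ^+ 3 = 0].
Proof.
move=> c00; have -> : c = \row_j [:: 0; c 0 1; c 0 2]`_j.
  apply/rowP => -[[|[|[|//]]] ?]; rewrite !mxE /=; [rewrite -c00 | |];
  by congr (c 0 _); apply: val_inj.
move: (c 0 1) (c 0 2) => x y.
(* E fixes e_0 and e_1; its last column makes the characteristic polynomial
   of companion_mx c - E equal to X^3. *)
exists (\matrix_(i, j) if j == 2 :> nat then [:: x + y + 1; x + 1; 0]`_i
                       else (i == j :> nat)%:R).
split; rewrite ?exprS ?expr0 ?mulr1 -?mulmxE; apply/matrixP => i j;
  rewrite !(big_ord_recl, big_ord0, mxE).
all: case: i => [[|[|[|//]]] ?]; case: j => [[|[|[|//]]] ?].
all: case: (F2_cases x) => ->; case: (F2_cases y) => -> /=; by apply/eqP.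
Qed.

Lemma nil_clean_companion_F2 n (c : 'rV['F_2]_n) :
  nil_clean_mx (companion_mx c).
Proof.
case: n c => [|n] c; first by exists 0; apply: thinmx0.
have [c00|/nil_clean_companion_trace1//] := F2_cases (c 0 0).
case: n c c00 => [|[|p]] c c00.
- exists 0; rewrite ?mulmx0 // subr0 expr1; apply/matrixP => i j.
  by rewrite !ord1 !mxE -c00; congr (c 0 _); apply: val_inj.
- exact: nil_clean_companion2.
- have [|E [EE Ee0 nilCE]] :=
    @companion3_nil_clean_witness (lsubmx (c : 'rV_(3 + p))).
    by rewrite mxE -c00; congr (c 0 _); apply: val_inj.
  rewrite -[c](hsubmxK (c : 'rV_(3 + p))).
  exact: nil_clean_companion_row_mx EE Ee0 nilCE.
Qed.

Theorem nil_clean_mx_F2 n (A : 'M['F_2]_n) : nil_clean_mx A.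
Proof.
elim/ltn_ind: n A => -[|n] IH A; first by exists 0; apply: thinmx0.
pose K := krylov_mx (delta_mx 0 0) A.
have KA : K *m A = _ *m K := krylov_mx_companion (delta_mx 0 0) A.
have [Ku|Knu] := boolP (K \in unitmx).
  exact: nil_clean_mx_similar Ku KA (nil_clean_companion_F2 _).
have rank_gt0 : (0 < \rank K)%N.
  have rowK_max : row ord_max K = delta_mx 0 0.
    by rewrite rowK /= subnn expr0 mulmx1.
  by have := mxrankS (row_sub ord_max K); rewrite rowK_max mxrank_delta.
apply: (nil_clean_mx_stable (U := K)); first by rewrite KA submxMl.
all: move=> B; apply: IH.
- by rewrite ltn_neqAle rank_leq_row andbT -row_free_unit in Knu *.
- by rewrite ltn_subrL rank_gt0.
Qed.

Lemma mx_torsion_clean_with_F2 m k :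
  (m <= 2 ^ k)%N -> mx_torsion_clean_with m (2 ^ k).
Proof.
move=> le_m2k A; have [E EE nilN] := nil_clean_mx_F2 (A + 1).
have two0 : 2%:R = 0 :> 'M['F_2]_m.
  by apply/matrixP => i j; rewrite mulmxnE !mxE (mulrn_pchar (pchar_Fp _)).
have U_def : A - E = A + 1 - E + 1.
  by rewrite (addrAC A 1) -[RHS]addrA -mulr2n two0 addr0.
have U2k : (A - E) ^+ (2 ^ k) = 1.
  by rewrite U_def (unipotent_expr2n two0 nilN).
exists E, (A - E); split => //; last by rewrite addrC subrK.
apply: (proj1 (mulmx1_unit (B := (A - E) ^+ (2 ^ k).-1) _)).
by rewrite mulmxE -exprS prednK ?expn_gt0.
Qed.

Definition mx_torsion_cleanb m n : bool :=
  [forall A : 'M['F_2]_m, exists E : 'M_m, exists U : 'M_m,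
     [&& E *m E == E, U \in unitmx, U ^+ n == 1 & A == E + U]].

Lemma mx_torsion_cleanP m n :
  reflect (mx_torsion_clean_with m n) (mx_torsion_cleanb m n).
Proof.
apply: (iffP forallP) => [clean A | clean A].
  have /existsP[E /existsP[U /and4P[/eqP EE Uu /eqP Un /eqP AEU]]] := clean A.
  by exists E, U.
have [E [U [EE Uu Un AEU]]] := clean A.
by apply/existsP; exists E; apply/existsP; exists U; rewrite EE Uu Un AEU !eqxx.
Qed.

Theorem proposition1p6 (m k : nat) :
  (m <= 2 ^ k)%N -> exists n : nat, (n <= 2 ^ k)%N /\ mx_n_torsion_clean m n.
Proof.
move=> /mx_torsion_clean_with_F2/mx_torsion_cleanP clean2k.
have ex_n : exists n, (0 < n)%N && mx_torsion_cleanb m n.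
  by exists (2 ^ k)%N; rewrite expn_gt0.
case: (ex_minnP ex_n) => n /andP[n_gt0 /mx_torsion_cleanP clean_n] min_n.
exists n; split; first by apply: min_n; rewrite expn_gt0.
split=> // j j_gt0 lt_jn /mx_torsion_cleanP clean_j.
by have := min_n j; rewrite j_gt0 clean_j leqNgt lt_jn => /(_ isT).
Qed.
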